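(* Let $S_X,S_Y$ be finite nonempty action sets and $\varphi:S_X\times S_Y\to\mathbb{R}$. The following are equivalent: (a) $\varphi\equiv0$ is enforceable; (b) $\Phi_X^+\neq\emptyset$ and $\Phi_X^-\neq\emptyset$; (c) $0\in J(\varphi)$, where $$J(\varphi)=\Big[\min_{\tau_X\in\Delta(S_X)}\max_{s_Y\in S_Y}\varphi(\tau_X,s_Y),\ \max_{\tau_X\in\Delta(S_X)}\min_{s_Y\in S_Y}\varphi(\tau_X,s_Y)\Big]$$ (interpreted as the empty set if the left endpoint exceeds the right endpoint).
   Context: Two players $X,Y$ play a repeated game with finite action sets $S_X,S_Y$; $\Delta(S)$ denotes the probability distributions on $S$; $\varphi(\tau_X,s_Y)=\mathbb{E}_{s_X\sim\tau_X}[\varphi(s_X,s_Y)]$. Histories: $\mathcal{H}=\bigcup_{T\ge0}(S_X\times S_Y)^T$; behavioral strategies are maps $\sigma:\mathcal{H}\to\Delta(S)$; players independently draw actions each round from their strategies evaluated at the history of realized action pairs, with $\mathbb{E}_{\sigma_X,\sigma_Y}$ the expectation over the resulting play. For $\lambda\in[0,1)$, $\sigma_X$ is $(\varphi,\lambda)$-autocratic if for every behavioral strategy $\sigma_Y$, $\mathbb{E}_{\sigma_X,\sigma_Y}[(1-\lambda)\sum_{t\ge0}\lambda^t\varphi(s_X^t,s_Y^t)]=0$; it is $(\varphi,1)$-autocratic if for every $\sigma_Y$ the limit $\lim_{T\to\infty}\frac1{T+1}\sum_{t=0}^T\mathbb{E}_{\sigma_X,\sigma_Y}[\varphi(s_X^t,s_Y^t)]$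 exists and equals $0$. $\varphi\equiv0$ is enforceable if a $(\varphi,\lambda)$-autocratic behavioral strategy exists for some $\lambda\in[0,1]$. $\Phi_X^+=\{\tau_X\in\Delta(S_X):\min_{s_Y}\varphi(\tau_X,s_Y)\ge0\}$, $\Phi_X^-=\{\tau_X\in\Delta(S_X):\max_{s_Y}\varphi(\tau_X,s_Y)\le0\}$. *)

From HB Require Import structures.
From mathcomp Require Import all_boot all_order all_algebra.
From mathcomp Require Import all_classical all_reals topology normedtype sequences.
Set Implicit Arguments. Unset Strict Implicit. Unset Printing Implicit Defensive.
Import Order.TTheory GRing.Theory Num.Theory.
Import numFieldNormedType.Exports.
Local Open Scope ring_scope.
Local Open Scope classical_set_scope.

Section Game.
Variables (R : realType) (SX SY : finType).

Definition is_dist (S : finType) (p : {ffun S -> R}) : Prop :=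
  (forall s, 0 <= p s) /\ \sum_(s : S) p s = 1.

(* histories: finite sequences of realized action pairs, chronological order *)
Definition history := seq (SX * SY).

Definition behavioral (S : finType) (sigma : history -> {ffun S -> R}) : Prop :=
  forall h, is_dist (sigma h).

Definition phi_mix (phi : SX -> SY -> R) (tau : {ffun SX -> R}) (sy : SY) : R :=
  \sum_(sx : SX) tau sx * phi sx sy.

Variables (sX : history -> {ffun SX -> R}) (sY : history -> {ffun SY -> R}).

(* probability of a history, given in reverse order (latest pair first) *)
Fixpoint prob_rev (r : history) : R :=
  match r with
  | [::] => 1
  | (a, b) :: r' => prob_rev r' * sX (rev r') a * sY (rev r') b
  end.

Definition prob_hist (h : history) : R := prob_rev (rev h).

Definition stage_exp (phi : SX -> SY -> R) (t : nat) : R :=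
  \sum_(h : t.-tuple (SX * SY))
     prob_hist h * \sum_(a : SX) \sum_(b : SY) sX h a * sY h b * phi a b.

End Game.

Definition autocratic (R : realType) (SX SY : finType) (phi : SX -> SY -> R)
  (lam : R) (sX : history SX SY -> {ffun SX -> R}) : Prop :=
  forall sY : history SX SY -> {ffun SY -> R}, behavioral sY ->
  if lam < 1 then
    (fun n => \sum_(0 <= t < n) (1 - lam) * lam ^+ t * stage_exp sX sY phi t)
      @ \oo --> (0 : R)
  else
    (fun T => (T.+1%:R)^-1 * \sum_(0 <= t < T.+1) stage_exp sX sY phi t)
      @ \oo --> (0 : R).

Definition enforceable (R : realType) (SX SY : finType) (phi : SX -> SY -> R) : Prop :=
  exists lam : R, 0 <= lam <= 1 /\
  exists sX : history SX SY -> {ffun SX -> R}, behavioral sX /\ autocratic phi lam sX.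

Definition PhiX_plus (R : realType) (SX SY : finType) (phi : SX -> SY -> R)
  : set {ffun SX -> R} :=
  [set tau | is_dist tau /\ forall sy, 0 <= phi_mix phi tau sy].

Definition PhiX_minus (R : realType) (SX SY : finType) (phi : SX -> SY -> R)
  : set {ffun SX -> R} :=
  [set tau | is_dist tau /\ forall sy, phi_mix phi tau sy <= 0].

Definition maxY (R : realType) (SX SY : finType) (phi : SX -> SY -> R)
  (tau : {ffun SX -> R}) : R := sup [set phi_mix phi tau sy | sy in [set: SY]].
Definition minY (R : realType) (SX SY : finType) (phi : SX -> SY -> R)
  (tau : {ffun SX -> R}) : R := inf [set phi_mix phi tau sy | sy in [set: SY]].

(* endpoints of J(phi): min_tau max_sY and max_tau min_sY (attained by compactness) *)
Definition J_left (R : realType) (SX SY : finType) (phi : SX -> SY -> R) : R :=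
  inf [set maxY phi tau | tau in [set tau | is_dist tau]].
Definition J_right (R : realType) (SX SY : finType) (phi : SX -> SY -> R) : R :=
  sup [set minY phi tau | tau in [set tau | is_dist tau]].

Definition J (R : realType) (SX SY : finType) (phi : SX -> SY -> R) : set R :=
  [set x | J_left phi <= x <= J_right phi].

(* If X has some tp in PhiX_plus and some tm in PhiX_minus, let X track the
   running sum of its stage payoffs averaged over its own mixed action only
   (Y's realized action enters), playing tp while this sum is negative and tm
   otherwise.  The sum then stays bounded, while its expectation is the sum of
   the stage expectations, so their Cesaro mean tends to 0.
   Conversely, if PhiX_plus is empty, compactness of the simplex gives d > 0
   such that Y can answer every mixed action of X by a pure action with payoff
   at most -d; against this answer all stage expectations are at most -d, so
   no average of them tends to 0.  The same d shows that PhiX_plus is nonempty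
   iff the right endpoint of J is nonnegative, and replacing phi by -phi
   handles PhiX_minus and the left endpoint. *)

From HB Require Import structures.
From mathcomp Require Import all_boot all_order all_algebra.
From mathcomp Require Import all_classical all_reals topology normedtype sequences.
From mathcomp Require Import matrix_normedtype derive.
From mathcomp Require Import lra.
Set Implicit Arguments. Unset Strict Implicit. Unset Printing Implicit Defensive.
Import Order.TTheory GRing.Theory Num.Theory.
Import numFieldNormedType.Exports.
Local Open Scope ring_scope.
Local Open Scope classical_set_scope.

Lemma big_tuple_rcons (R : zmodType) (T : finType) n (F : seq T -> R) :
  \sum_(t : n.+1.-tuple T) F t = \sum_(t : n.-tuple T) \sum_(x : T) F (rcons t x).
Proof.
rewrite pair_big /= (reindex (fun p : n.-tuple T * T => [tuple of rcons p.1 p.2])) //=.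
exists (fun t => ([tuple of belast (thead t) (behead t)], last (thead t) (behead t))).
- move=> [t x] _; rewrite /thead (tnth_nth x) nth0.
  by case: t => -[|y s] ? //=; congr pair; rewrite ?last_rcons //;
    apply: val_inj; rewrite /= ?belast_rcons.
- by move=> t _; apply: val_inj; rewrite /= -lastI [in RHS](tuple_eta t).
Qed.

Section Distributions.
Context {R : realType}.

Definition point_dist (S : finType) (s : S) : {ffun S -> R} := [ffun s' => (s' == s)%:R].

Lemma is_dist_point (S : finType) (s : S) : is_dist (point_dist s).
Proof.
split=> [s'|]; first by rewrite ffunE ler0n.
rewrite (bigD1 s) //= ffunE eqxx big1 ?addr0 // => s' /negbTE ns's.
by rewrite ffunE ns's.
Qed.

Lemma dist_le1 (S : finType) (t : {ffun S -> R}) s : is_dist t -> t s <= 1.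
Proof. by move=> [t_ge0 <-]; rewrite (bigD1 s) //= lerDl sumr_ge0. Qed.

Lemma dist_sum_cst (S : finType) (q : {ffun S -> R}) c :
  is_dist q -> \sum_s q s * c = c.
Proof. by move=> [_ q1]; rewrite -mulr_suml q1 mul1r. Qed.

Variables (SX SY : finType) (phi : SX -> SY -> R).

Lemma sum_prod_dist (p : {ffun SX -> R}) (q : {ffun SY -> R}) (f : SY -> R) :
  is_dist p -> \sum_a \sum_b p a * q b * f b = \sum_b q b * f b.
Proof.
move=> [_ p1]; rewrite exchange_big /=; apply: eq_bigr => b _.
by rewrite -mulr_suml -mulr_suml p1 mul1r.
Qed.

Definition mix_payoff (p : {ffun SX -> R}) (q : {ffun SY -> R}) : R :=
  \sum_a \sum_b p a * q b * phi a b.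

Lemma mix_payoffE p q : mix_payoff p q = \sum_b q b * phi_mix phi p b.
Proof.
rewrite /mix_payoff exchange_big /=; apply: eq_bigr => b _.
by rewrite /phi_mix mulr_sumr; apply: eq_bigr => a _; rewrite mulrCA mulrA.
Qed.

Lemma mix_payoff_point p y : mix_payoff p (point_dist y) = phi_mix phi p y.
Proof.
rewrite mix_payoffE (bigD1 y) //= ffunE eqxx mul1r big1 ?addr0 // => b /negbTE nby.
by rewrite ffunE nby mul0r.
Qed.

Lemma norm_phi_mix_le t y : is_dist t -> `|phi_mix phi t y| <= \sum_x `|phi x y|.
Proof.
move=> t_dist; have [t_ge0 _] := t_dist.
rewrite (le_trans (ler_norm_sum _ _ _)) // ler_sum // => x _.
by rewrite normrM ger0_norm // ler_piMl // dist_le1.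
Qed.

End Distributions.

Section PlayExpectation.
Variables (R : realType) (SX SY : finType).
Variables (sX : history SX SY -> {ffun SX -> R}) (sY : history SX SY -> {ffun SY -> R}).

Definition play_expect n (f : history SX SY -> R) : R :=
  \sum_(h : n.-tuple (SX * SY)) prob_hist sX sY h * f h.

Lemma stage_expE phi t :
  stage_exp sX sY phi t = play_expect t (fun h => mix_payoff phi (sX h) (sY h)).
Proof. by []. Qed.

Lemma prob_hist_rcons h a b :
  prob_hist sX sY (rcons h (a, b)) = prob_hist sX sY h * sX h a * sY h b.
Proof. by rewrite /prob_hist rev_rcons /= revK. Qed.

Lemma play_expect0 f : play_expect 0 f = f [::].
Proof.
rewrite /play_expect (big_pred1 [tuple]) => [|t]; first by rewrite /prob_hist mul1r.
by apply/esym/eqP; exact: tuple0.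
Qed.

Lemma play_expectS n f :
  play_expect n.+1 f =
  play_expect n (fun h => \sum_a \sum_b sX h a * sY h b * f (rcons h (a, b))).
Proof.
rewrite /play_expect (big_tuple_rcons n (fun s => prob_hist sX sY s * f s)).
apply: eq_bigr => h _.
rewrite mulr_sumr; under [RHS]eq_bigr do rewrite mulr_sumr.
by rewrite pair_big; apply: eq_bigr => -[a b] _; rewrite prob_hist_rcons !mulrA.
Qed.

Lemma play_expectD n f g :
  play_expect n (fun h => f h + g h) = play_expect n f + play_expect n g.
Proof. by rewrite /play_expect -big_split; apply: eq_bigr => h _; rewrite mulrDr. Qed.

Hypotheses (sX_beh : behavioral sX) (sY_beh : behavioral sY).

Lemma prob_hist_ge0 h : 0 <= prob_hist sX sY h.
Proof.
rewrite /prob_hist; elim: (rev h) => [|[a b] r IH] //=.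
by rewrite !mulr_ge0 //; [case: (sX_beh (rev r)) | case: (sY_beh (rev r))].
Qed.

Lemma play_expect_cst n c : play_expect n (fun=> c) = c.
Proof.
elim: n => [|n IH]; first by rewrite play_expect0.
rewrite play_expectS -[RHS]IH; congr play_expect; apply: funext => h.
by rewrite sum_prod_dist // dist_sum_cst.
Qed.

Lemma ler_play_expect n f g :
  (forall h, f h <= g h) -> play_expect n f <= play_expect n g.
Proof. by move=> fg; rewrite ler_sum // => h _; rewrite ler_wpM2l ?prob_hist_ge0. Qed.

Lemma norm_play_expect_le n f c :
  (forall h, `|f h| <= c) -> `|play_expect n f| <= c.
Proof.
move=> fc; rewrite ler_norml -[X in X <= _ <= _](play_expect_cst n).
rewrite -[X in _ <= _ <= X](play_expect_cst n).
by apply/andP; split; apply: ler_play_expect => h; have /[!ler_norml]/andP[] := fc h.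
Qed.

End PlayExpectation.

Section RealSequences.
Variable R : realType.
Implicit Types (u v : nat -> R) (c M : R).

Lemma cvg_cesaro_bounded_sums u M :
  (forall T, `|\sum_(0 <= t < T) u t| <= M) ->
  (fun T => T.+1%:R^-1 * \sum_(0 <= t < T.+1) u t) @ \oo --> 0.
Proof.
move=> sumM.
have bound_cvg0 : (fun T => T.+1%:R^-1 * M) @ \oo --> 0.
  by rewrite -(mul0r M); apply: cvgMr_tmp; exact: cvg_harmonic.
have neg_bound_cvg0 : (fun T => - (T.+1%:R^-1 * M)) @ \oo --> (0 : R).
  by rewrite -oppr0; exact: cvgN.
apply: (squeeze_cvgr _ neg_bound_cvg0 bound_cvg0).
apply: nearW => T; rewrite -ler_norml normrM ger0_norm ?invr_ge0 //.
by rewrite ler_wpM2l ?invr_ge0.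
Qed.

Lemma cesaro_le u c T :
  (forall t, u t <= c) -> T.+1%:R^-1 * \sum_(0 <= t < T.+1) u t <= c.
Proof.
move=> uc; rewrite ler_pdivrMl ?ltr0n // mulr_natl -(subn0 T.+1) -sumr_const_nat.
by rewrite ler_sum_nat.
Qed.

Lemma discounted_sum_le u lam c n :
  0 <= lam < 1 -> c <= 0 -> (forall t, u t <= c) ->
  \sum_(0 <= t < n.+1) (1 - lam) * lam ^+ t * u t <= (1 - lam) * c.
Proof.
move=> /andP[lam_ge0 lam_lt1] c_le0 uc; have lam1_ge0 : 0 <= 1 - lam by rewrite subr_ge0 ltW.
rewrite big_nat_recl // expr0 mulr1 -[leRHS]addr0 lerD ?ler_wpM2l //.
rewrite sumr_le0 // => t _; rewrite mulr_ge0_le0 ?mulr_ge0 ?exprn_ge0 //.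
exact: le_trans (uc _) c_le0.
Qed.

Lemma not_cvg0_le_neg v c : 0 < c -> (forall n, v n.+1 <= - c) -> ~ v @ \oo --> 0.
Proof.
move=> c_gt0 vc /cvgr_gt /(_ (- c)) [|N _ vN]; first by rewrite oppr_lt0.
by have := vN N.+1 (leqnSn N); rewrite ltNge vc.
Qed.

End RealSequences.

Section FiniteInf.
Variables (R : realType) (I : finType) (f : I -> R).

Lemma inf_image_le i : inf [set f j | j in [set: I]] <= f i.
Proof.
apply: ge_inf; last by exists i.
by exists (\big[Num.min/0]_j f j) => _ [j _ <-]; exact: bigmin_le.
Qed.

Lemma le_inf_image c (i0 : I) : (forall i, c <= f i) -> c <= inf [set f j | j in [set: I]].
Proof. by move=> cf; apply: lb_le_inf => [|_ [i _ <-] //]; exists (f i0), i0. Qed.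

End FiniteInf.

Definition opp_payoff (R : realType) (SX SY : finType) (phi : SX -> SY -> R) :=
  fun a b => - phi a b.

Section OppositePayoff.
Variables (R : realType) (SX SY : finType) (phi : SX -> SY -> R).

Lemma phi_mix_opp t y : phi_mix (opp_payoff phi) t y = - phi_mix phi t y.
Proof. by rewrite /phi_mix -sumrN; apply: eq_bigr => x _; rewrite mulrN. Qed.

Lemma PhiX_minusE : PhiX_minus phi = PhiX_plus (opp_payoff phi).
Proof.
apply/seteqP; split=> t [t_dist t_mix]; split=> // y; have := t_mix y;
  by rewrite phi_mix_opp ?oppr_ge0 // oppr_ge0.
Qed.

Lemma stage_exp_opp sX sY t :
  stage_exp sX sY (opp_payoff phi) t = - stage_exp sX sY phi t.
Proof.
rewrite /stage_exp -sumrN; apply: eq_bigr => h _; rewrite -mulrN -sumrN.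
by congr (_ * _); apply: eq_bigr => a _; rewrite -sumrN; apply: eq_bigr => b _; rewrite mulrN.
Qed.

Lemma enforceable_opp : enforceable phi -> enforceable (opp_payoff phi).
Proof.
move=> [lam [lam01 [sX [sX_beh sX_auto]]]]; exists lam; split=> //; exists sX; split=> //.
move=> sY sY_beh; have := sX_auto sY sY_beh; rewrite /=.
case: ifP => _ /cvgN; rewrite oppr0 => lim; apply: cvg_trans lim; apply: near_eq_cvg.
all: apply: nearW => n /=.
  by under eq_bigr do rewrite stage_exp_opp mulrN; rewrite sumrN.
by under eq_bigr do rewrite stage_exp_opp; rewrite sumrN mulrN.
Qed.

Lemma minY_opp t : minY (opp_payoff phi) t = - maxY phi t.
Proof.
rewrite /minY /maxY /inf image_comp; congr (- sup (_ @` _)).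
by apply: funext => y /=; rewrite phi_mix_opp; exact: opprK.
Qed.

Lemma J_leftE : J_left phi = - J_right (opp_payoff phi).
Proof.
rewrite /J_left /J_right /inf image_comp; congr (- sup (_ @` _)).
by apply: funext => t /=; rewrite minY_opp.
Qed.

End OppositePayoff.

Section BalanceStrategy.
Variables (R : realType) (SX SY : finType) (phi : SX -> SY -> R).
Variables (tp tm : {ffun SX -> R}).
Hypotheses (tp_plus : PhiX_plus phi tp) (tm_minus : PhiX_minus phi tm).

Definition balance_mix (e : R) := if e < 0 then tp else tm.

Definition balance_step e (x : SX * SY) := e + phi_mix phi (balance_mix e) x.2.

Definition balance (h : history SX SY) : R := foldl balance_step 0 h.

Definition balance_strategy (h : history SX SY) := balance_mix (balance h).

Lemma balance_rcons h x :
  balance (rcons h x) = balance h + phi_mix phi (balance_strategy h) x.2.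
Proof. by rewrite /balance foldl_rcons. Qed.

Definition balance_bound : R :=
  \big[Num.max/0]_b Num.max `|phi_mix phi tp b| `|phi_mix phi tm b|.

Lemma behavioral_balance_strategy : behavioral balance_strategy.
Proof.
by move=> h; rewrite /balance_strategy /balance_mix; case: ifP => _;
  [case: tp_plus | case: tm_minus].
Qed.

Lemma norm_balance_mix_le e b : `|phi_mix phi (balance_mix e) b| <= balance_bound.
Proof.
rewrite (le_trans _ (le_bigmax _ _ b)) // le_max /balance_mix.
by case: ifP => _; rewrite lexx ?orbT.
Qed.

Lemma norm_balance_step_le e x :
  `|e| <= balance_bound -> `|balance_step e x| <= balance_bound.
Proof.
rewrite /balance_step !ler_norml => /andP[Me eM].
have /[!ler_norml]/andP[Mv vM] := norm_balance_mix_le e x.2.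
move: Mv vM; rewrite /balance_mix; case: (ltP e 0) => [e_lt0 | e_ge0].
- have [_ /(_ x.2) v_ge0] := tp_plus; move=> *; apply/andP; split; lra.
- have [_ /(_ x.2) v_le0] := tm_minus; move=> *; apply/andP; split; lra.
Qed.

Lemma norm_balance_le h : `|balance h| <= balance_bound.
Proof.
elim/last_ind: h => [|h x IH]; last by rewrite balance_rcons norm_balance_step_le.
by rewrite normr0 /balance_bound bigmax_ge_id.
Qed.

Lemma sum_stage_exp_balance sY : behavioral sY -> forall T,
  \sum_(0 <= t < T) stage_exp balance_strategy sY phi t =
  play_expect balance_strategy sY T balance.
Proof.
move=> sY_beh; elim=> [|T IH]; first by rewrite big_geq // play_expect0.
rewrite big_nat_recr //= IH stage_expE -play_expectD play_expectS.
congr play_expect; apply: funext => h.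
have bs_dist := behavioral_balance_strategy h.
under eq_bigr do under eq_bigr do rewrite balance_rcons.
rewrite (sum_prod_dist _ (fun b => balance h + phi_mix phi (balance_strategy h) b)) //.
rewrite mix_payoffE -[X in X + _](dist_sum_cst _ (sY_beh h)) -big_split /=.
by apply: eq_bigr => b _; rewrite mulrDr.
Qed.

Lemma autocratic_balance_strategy : autocratic phi 1 balance_strategy.
Proof.
move=> sY sY_beh; rewrite ltxx; apply: (@cvg_cesaro_bounded_sums _ _ balance_bound) => T.
rewrite sum_stage_exp_balance //; apply: norm_play_expect_le => //.
  exact: behavioral_balance_strategy.
exact: norm_balance_le.
Qed.

End BalanceStrategy.

Section Simplex.
Variables (R : realType) (S : finType).
Local Notation n := #|S|.

Definition ffun_of_rV (v : 'rV[R]_n) : {ffun S -> R} := [ffun s => v ord0 (enum_rank s)].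

Definition rV_of_ffun (t : {ffun S -> R}) : 'rV[R]_n := \row_i t (enum_val i).

Lemma rV_of_ffunK : cancel rV_of_ffun ffun_of_rV.
Proof. by move=> t; apply/ffunP => s; rewrite !ffunE mxE enum_rankK. Qed.

(* Mixed actions are seen as points of 'rV_#|S| to use the compactness of
   products of segments there. *)
Definition simplex : set 'rV[R]_n := [set v | is_dist (ffun_of_rV v)].

Lemma continuous_ffun_of_rV s : continuous (fun v : 'rV[R]_n => ffun_of_rV v s).
Proof. by move=> v; under eq_fun do rewrite ffunE; exact: coord_continuous. Qed.

Lemma closed_simplex : closed simplex.
Proof.
have -> : simplex = \bigcap_s [set v | 0 <= ffun_of_rV v s] `&`
                    [set v | \sum_s ffun_of_rV v s = 1].
  by apply/seteqP; split=> v [v_ge0 v1]; split=> // s; [move=> _ | ]; exact: v_ge0.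
apply: closedI.
  apply: closed_bigI => s _.
  apply: (@preimage_closed _ _ (fun v => ffun_of_rV v s) [set r | 0 <= r]).
    by move=> v _; exact: continuous_ffun_of_rV.
  exact: closed_ge.
apply: (@preimage_closed _ _ (fun v => \sum_s ffun_of_rV v s) [set r | r = 1]).
  move=> v _; apply: (continuous_big add_continuous) => s _.
  exact: continuous_ffun_of_rV.
exact: closed_eq.
Qed.

Lemma compact_simplex : compact simplex.
Proof.
apply: (subclosed_compact closed_simplex (@rV_compact _ n (fun _ => `[0 : R, 1]%classic) _)).
  by move=> _; exact: segment_compact.
move=> v v_dist i; have [/(_ (enum_val i)) v_ge0 _] := v_dist.
have v_le1 := dist_le1 (enum_val i) v_dist.
by rewrite ffunE enum_valK in v_ge0 v_le1; rewrite /= in_itv /= v_ge0 v_le1.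
Qed.

Lemma dist_EVT_max (f : {ffun S -> R} -> R) (s0 : S) :
  continuous (fun v => f (ffun_of_rV v)) ->
  exists2 t, is_dist t & forall t', is_dist t' -> f t' <= f t.
Proof.
move=> f_cont; have simplex_point : simplex (rV_of_ffun (point_dist s0)).
  by rewrite /simplex /= rV_of_ffunK; exact: is_dist_point.
have [v /set_mem v_dist v_max] := compact_EVT_max (ex_intro _ _ simplex_point)
  compact_simplex (continuous_subspaceT f_cont).
exists (ffun_of_rV v) => // t t_dist; rewrite -(rV_of_ffunK t); apply/v_max/mem_set.
by rewrite /simplex /= rV_of_ffunK.
Qed.

End Simplex.

Section PlusSet.
Variables (R : realType) (SX SY : finType) (phi : SX -> SY -> R).
Hypotheses (hX : (0 < #|SX|)%N) (hY : (0 < #|SY|)%N).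

Lemma continuous_phi_mix y : continuous (fun v => phi_mix phi (ffun_of_rV v) y).
Proof.
move=> v; apply: (continuous_big add_continuous) => x _ w.
apply: (continuousM (s := fun w => ffun_of_rV w x) (t := fun=> phi x y)).
  exact: continuous_ffun_of_rV.
exact: cst_continuous.
Qed.

Lemma PhiX_plus_empty_punishment : ~ (PhiX_plus phi !=set0) ->
  exists2 d : R, 0 < d & forall t, is_dist t -> exists y, phi_mix phi t y <= - d.
Proof.
move=> no_plus; have [x0 _] := card_gt0P hX; have [y0 _] := card_gt0P hY.
(* G is nonpositive and vanishes exactly on PhiX_plus, so its maximum on the
   simplex is negative. *)
pose G t := \sum_y Num.min (phi_mix phi t y) 0.
have G_cont : continuous (fun v => G (ffun_of_rV v)).
  move=> v; apply: (continuous_big add_continuous) => y _ w.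
  apply: (continuous_min (f := fun w => phi_mix phi (ffun_of_rV w) y) (g := fun=> 0)).
    exact: continuous_phi_mix.
  exact: cst_continuous.
have [ts ts_dist G_max] := dist_EVT_max x0 G_cont.
have [y ts_y] : exists y, phi_mix phi ts y < 0.
  apply: contrapT => /forallNP ts_ge0; apply: no_plus; exists ts; split=> // y.
  by rewrite leNgt; apply/negP/ts_ge0.
have G_lt0 : G ts < 0.
  have rest_le0 : \sum_(z | z != y) Num.min (phi_mix phi ts z) 0 <= 0.
    by apply: sumr_le0 => z _; rewrite ge_min lexx orbT.
  have : Num.min (phi_mix phi ts y) 0 < 0 by rewrite gt_min ts_y.
  by rewrite /G (bigD1 y) //=; lra.
pose d := - G ts / #|SY|%:R.
have d_gt0 : 0 < d by rewrite divr_gt0 ?oppr_gt0 ?ltr0n.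
exists d => // t t_dist; apply: contrapT => /forallNP t_gt.
have : G ts < G t.
  have -> : G ts = \sum_(y : SY) - d.
    by rewrite sumr_const -mulr_natr mulNr /d divfK ?opprK // pnatr_eq0 -lt0n.
  apply: ltr_sum => [|z _]; first by apply/hasP; exists y0; rewrite ?mem_index_enum.
  rewrite lt_min oppr_lt0 d_gt0 andbT ltNge; exact/negP/t_gt.
by rewrite ltNge G_max.
Qed.

Lemma enforceable_PhiX_plus : enforceable phi -> PhiX_plus phi !=set0.
Proof.
move=> [lam [/andP[lam_ge0 _] [sX [sX_beh sX_auto]]]].
apply: contrapT => /PhiX_plus_empty_punishment [d d_gt0 punish].
have [yh yh_punish] := choice (fun h => punish _ (sX_beh h)).
pose sY h : {ffun SY -> R} := point_dist (yh h).
have sY_beh : behavioral sY by move=> h; exact: is_dist_point.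
have stage_le t : stage_exp sX sY phi t <= - d.
  rewrite stage_expE -(play_expect_cst sX_beh sY_beh t (- d)).
  by apply: ler_play_expect => // h; rewrite mix_payoff_point.
have := sX_auto sY sY_beh; case: ifP => [lam_lt1 | _].
- apply: (@not_cvg0_le_neg _ _ ((1 - lam) * d)); first by rewrite mulr_gt0 ?subr_gt0.
  move=> n; rewrite -mulrN; apply: discounted_sum_le => //; last by rewrite oppr_le0 ltW.
  by rewrite lam_ge0.
- by apply: (not_cvg0_le_neg d_gt0) => T; exact: cesaro_le.
Qed.

Lemma PhiX_plus_neq0E : PhiX_plus phi !=set0 <-> 0 <= J_right phi.
Proof.
have [x0 _] := card_gt0P hX; have [y0 _] := card_gt0P hY; split.
- move=> [t [t_dist t_ge0]]; apply: le_trans (le_inf_image y0 t_ge0) _.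
  apply: ub_le_sup; last by exists t.
  exists (\sum_x `|phi x y0|) => _ [s s_dist <-].
  apply: le_trans (inf_image_le _ y0) _; apply: le_trans (ler_norm _) _.
  exact: norm_phi_mix_le.
- move=> J_ge0; apply: contrapT => /PhiX_plus_empty_punishment [d d_gt0 punish].
  have : J_right phi <= - d.
    apply: ge_sup.
      by exists (minY phi (point_dist x0)), (point_dist x0) => //; exact: is_dist_point.
    move=> _ [t t_dist <-]; have [y t_y] := punish t t_dist.
    exact: le_trans (inf_image_le _ y) t_y.
  by move=> /(le_trans J_ge0); rewrite oppr_ge0 leNgt d_gt0.
Qed.

End PlusSet.

Unset Implicit Arguments.

Theorem corollary3 (R : realType) (SX SY : finType)
  (hX : (0 < #|SX|)%N) (hY : (0 < #|SY|)%N) (phi : SX -> SY -> R) :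
  (enforceable phi <-> (PhiX_plus phi !=set0 /\ PhiX_minus phi !=set0)) /\
  ((PhiX_plus phi !=set0 /\ PhiX_minus phi !=set0) <-> J phi 0).
Proof.
rewrite PhiX_minusE; split; first split.
- move=> phi_enf; split; first exact: enforceable_PhiX_plus.
  exact/(enforceable_PhiX_plus hX hY)/enforceable_opp.
- move=> [[tp tp_plus]]; rewrite -PhiX_minusE => -[tm tm_minus].
  exists 1; rewrite lexx ler01; split=> //; exists (balance_strategy phi tp tm).
  split; [exact: behavioral_balance_strategy | exact: autocratic_balance_strategy].
- rewrite /J /= J_leftE oppr_le0 !PhiX_plus_neq0E //.
  by split=> [[-> ->] | /andP[]].
Qed.
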